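(* Let $Z$ be a time-inhomogeneous Markov chain on $\{0,1,2,\dots\}$ which at step $t$ moves from $0$ to $0$ with probability $\alpha_{t0}$ and to $1$ with probability $1-\alpha_{t0}$, and from $i\ge1$ to $i-1$ with probability $\alpha_{ti}$ and to $i+1$ with probability $1-\alpha_{ti}$. Let $\hat Z$ be the time-homogeneous random walk on $\{0,1,2,\dots\}$ which moves from $0$ to $1$ with probability $1$ and from $i\ge1$ to $i-1$ with probability $p$ and to $i+1$ with probability $1-p$. Let $C=\{0\}$ and let $g^{(t)}_n$, $n\ge1$, be the distribution of the time of the first return to $0$ after time $t$ for $Z$ given $Z_t=0$, i.e. $g^{(t)}_n=\mathbb{P}\{Z_{t+1}\ne0,\dots,Z_{t+n-1}\ne0,Z_{t+n}=0\mid Z_t=0\}$. Assume that $p>1/2$ and $p(1-p)\ge(1-\alpha_{ti})\alpha_{sj}$ for all $t,s,i,j$. Let $f_n=\hat{\mathbb{P}}\{\hat Z_0=0,\hat Z_1\ne0,\dots,\hat Z_{n-1}\ne0,\hat Z_n=0\}$ (probability of first return to $0$ at time $n$ for $\hat Z$ started at $0$), and set $\hat g_1=1$, $\hat g_n=f_n/p$ for $n>1$. Then for all $t$ and $k$, \[G^{(t)}_k\le\hat G_k,\qquad\text{where } G^{(t)}_k=\sum_{m>k}g^{(t)}_m,\ \hat G_k=\sum_{m>k}\hat g_m.\] *)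

From mathcomp Require Import all_boot all_order all_algebra.
From mathcomp Require Import all_classical all_reals all_analysis.
Set Implicit Arguments. Unset Strict Implicit. Unset Printing Implicit Defensive.
Import Order.TTheory GRing.Theory Num.Theory.
Local Open Scope ring_scope.

Section Chain.
Variable R : realType.

Definition Ptr (alpha : nat -> nat -> R) (t i j : nat) : R :=
  if i == 0%N then
    (if j == 0%N then alpha t 0%N else if j == 1%N then 1 - alpha t 0%N else 0)
  else if j == i.-1 then alpha t i
  else if j == i.+1 then 1 - alpha t i
  else 0.

(* fp alpha m s i = P{Z_{s+1} <> 0, ..., Z_{s+m-1} <> 0, Z_{s+m} = 0 | Z_s = i}
   (m >= 1; fp _ 0 _ _ = 0), computed by the Markov property: the one-step
   successor j of i lies in {0, ..., i+1}. *)
Fixpoint fp (alpha : nat -> nat -> R) (m s i : nat) {struct m} : R :=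
  match m with
  | 0%N => 0
  | m'.+1 => \sum_(j < i.+2)
      Ptr alpha s i j * (if (j : nat) == 0%N then (m' == 0%N)%:R else fp alpha m' s.+1 j)
  end.

Definition gret (alpha : nat -> nat -> R) (t n : nat) : R := fp alpha n t 0.

Definition alpha_hat (p : R) : nat -> nat -> R :=
  fun _ i => if i == 0%N then 0 else p.

Definition fhat (p : R) (n : nat) : R := gret (alpha_hat p) 0 n.

Definition ghat (p : R) (n : nat) : R :=
  if n == 0%N then 0 else if n == 1%N then 1 else fhat p n / p.

End Chain.

From mathcomp Require Import all_boot all_order all_algebra.
From mathcomp Require Import all_classical all_reals all_analysis.
From mathcomp Require Import ring.
Import Order.TTheory GRing.Theory Num.Theory.
Local Open Scope ring_scope.

(* The bound even holds termwise, g^(t)_n <= hat g_n.  A path of Z from i+1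
   down to 0 makes u up-steps and u+i+1 down-steps; with c := (sup alpha)/p
   every down-step probability is at most c p and every up-step probability at
   most (1-p)/c, so the path is at most c^(i+1) times as likely as the same
   path of hat Z.  For g^(t)_n (n >= 2) the first step 0 -> 1 contributes
   (1 - alpha t 0) c <= 1 - p <= 1/p. *)

Section FirstPassage.
Context {R : realType}.
Implicit Types (alpha : nat -> nat -> R) (p : R).

Lemma fp_S0 alpha m s :
  fp alpha m.+1 s 0 =
  alpha s 0%N * (m == 0%N)%:R + (1 - alpha s 0%N) * fp alpha m s.+1 1.
Proof. by rewrite /= !big_ord_recr big_ord0 /= /Ptr /= add0r. Qed.

Lemma fp_SS alpha m s i :
  fp alpha m.+1 s i.+1 =
  alpha s i.+1 * (if i == 0%N then (m == 0%N)%:R else fp alpha m s.+1 i)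
  + (1 - alpha s i.+1) * fp alpha m s.+1 i.+2.
Proof.
rewrite /= !big_ord_recr /= big1 ?add0r; last first.
  move=> j _; have lt_j_i := ltn_ord j.
  rewrite /Ptr /= (ltn_eqF lt_j_i) ifF ?mul0r //.
  by apply: ltn_eqF; apply: ltn_trans lt_j_i _.
rewrite /Ptr /= !eqxx (gtn_eqF (ltnSn i)) (ltn_eqF (ltnSn i.+1)).
by rewrite (@gtn_eqF i i.+2) // mul0r addr0.
Qed.

Lemma fp_ge0 {alpha} : (forall t i, 0 <= alpha t i <= 1) ->
  forall m s i, 0 <= fp alpha m s i.
Proof.
move=> alpha01; elim=> [//|m IHm] s [|i].
  have /andP[a_ge0 a_le1] := alpha01 s 0%N.
  by rewrite fp_S0 addr_ge0 // mulr_ge0 // subr_ge0.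
have /andP[a_ge0 a_le1] := alpha01 s i.+1.
by rewrite fp_SS addr_ge0 // mulr_ge0 ?subr_ge0 //; case: ifP.
Qed.

Lemma alpha_hat_prob {p} : 0 <= p <= 1 -> forall t i, 0 <= alpha_hat p t i <= 1.
Proof. by move=> p01 t i; rewrite /alpha_hat; case: ifP; rewrite ?lexx ?ler01. Qed.

Section Comparison.
Context {alpha : nat -> nat -> R} {p c : R}.
Hypothesis alpha01 : forall t i, 0 <= alpha t i <= 1.
Hypothesis p01 : 0 <= p <= 1.
Hypothesis c_ge0 : 0 <= c.
Hypothesis down_le : forall s j, alpha s j <= c * p.
Hypothesis up_le : forall s i, (1 - alpha s i) * c <= 1 - p.

Lemma fp_le_hat m s s' i :
  fp alpha m s i.+1 <= c ^+ i.+1 * fp (alpha_hat p) m s' i.+1.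
Proof.
have hat_ge0 := fp_ge0 (alpha_hat_prob p01).
elim: m s s' i => [|m IHm] s s' i; first by rewrite /= mulr0.
have /andP[a_ge0 a_le1] := alpha01 s i.+1.
rewrite !fp_SS /alpha_hat /= mulrDr; apply: lerD.
  have -> : c ^+ i.+1 * (p * (if i == 0%N then (m == 0%N)%:R
                                else fp (alpha_hat p) m s'.+1 i))
          = c * p * (c ^+ i * (if i == 0%N then (m == 0%N)%:R
                                else fp (alpha_hat p) m s'.+1 i)).
    by rewrite exprS; ring.
  case: i IHm a_ge0 a_le1 => [|i] IHm a_ge0 _ /=.
    by rewrite expr0 mul1r ler_wpM2r //; case: (m == 0%N).
  by rewrite ler_pM ?fp_ge0.
apply: le_trans (_ : (1 - alpha s i.+1) * (c ^+ i.+2 * fp (alpha_hat p) m s'.+1 i.+2)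
                     <= _).
  by rewrite ler_wpM2l ?subr_ge0.
have -> : (1 - alpha s i.+1) * (c ^+ i.+2 * fp (alpha_hat p) m s'.+1 i.+2)
        = c ^+ i.+1 * ((1 - alpha s i.+1) * c * fp (alpha_hat p) m s'.+1 i.+2).
  by rewrite exprS; ring.
by rewrite ler_wpM2l ?exprn_ge0 // ler_wpM2r.
Qed.

Hypothesis p_gt0 : 0 < p.

Lemma gret_le_ghat t n : gret alpha t n <= ghat p n.
Proof.
rewrite /gret /ghat; case: n => [|[|m]]; first exact: lexx.
  by rewrite fp_S0 mulr1 mulr0 addr0; case/andP: (alpha01 t 0%N).
have /andP[_ a_le1] := alpha01 t 0%N.
rewrite /fhat /gret !fp_S0 /= !mulr0 !add0r /alpha_hat /= subr0 mul1r.
apply: le_trans (_ : (1 - alpha t 0%N) * (c * fp (alpha_hat p) m.+1 1 1) <= _).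
  rewrite ler_wpM2l ?subr_ge0 //.
  have := fp_le_hat m.+1 t.+1 1 0; rewrite expr1; exact.
rewrite mulrA mulrC ler_wpM2l ?(fp_ge0 (alpha_hat_prob p01)) //.
apply: le_trans (up_le t 0%N) _.
case/andP: p01 => p_ge0 p_le1.
by rewrite (@le_trans _ _ 1) ?gerBl ?invf_ge1.
Qed.

End Comparison.

Lemma exists_comparison_ratio {alpha p} :
  (forall t i, 0 <= alpha t i <= 1) -> 0 < p ->
  (forall t s i j, (1 - alpha t i) * alpha s j <= p * (1 - p)) ->
  exists2 c : R, 0 <= c &
    (forall s j, alpha s j <= c * p) /\ (forall s i, (1 - alpha s i) * c <= 1 - p).
Proof.
move=> alpha01 p_gt0 alpha_cmp.
pose A := [set x : R | exists s j, x = alpha s j]%classic.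
have A0 : A (alpha 0%N 0%N) by exists 0%N, 0%N.
have A_sup : has_sup A.
  by split; [exists (alpha 0%N 0%N) | exists 1 => _ [s [j ->]]; case/andP: (alpha01 s j)].
have le_sup s j : alpha s j <= sup A by apply: sup_upper_bound => //; exists s, j.
have sup_cmp s i : (1 - alpha s i) * sup A <= p * (1 - p).
  have /andP[a_ge0 a_le1] := alpha01 s i.
  have [a_eq1|a_neq1] := eqVneq (alpha s i) 1.
    rewrite a_eq1 subrr mul0r; apply: le_trans (alpha_cmp s s i i).
    by rewrite a_eq1 subrr mul0r.
  have a_gt0 : 0 < 1 - alpha s i by rewrite subr_gt0 lt_neqAle a_neq1.
  rewrite mulrC -ler_pdivlMr //; apply: ge_sup => [|_ [s' [j ->]]].
    by exists (alpha 0%N 0%N).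
  by rewrite ler_pdivlMr // mulrC alpha_cmp.
exists (sup A / p).
  apply: divr_ge0; last exact: ltW.
  apply: le_trans (le_sup 0%N 0%N).
  by case/andP: (alpha01 0%N 0%N).
split=> [s j|s i]; first by rewrite divfK ?gt_eqF.
by rewrite mulrA ler_pdivrMr // [_ * p]mulrC.
Qed.

End FirstPassage.

Theorem lemma2 (R : realType) (alpha : nat -> nat -> R) (p : R)
  (halpha : forall t i, 0 <= alpha t i <= 1)
  (hp1 : p <= 1) (hp : 1 / 2 < p)
  (hcmp : forall t s i j, (1 - alpha t i) * alpha s j <= p * (1 - p)) :
  forall t k : nat,
    (\sum_(k.+1 <= m <oo) (gret alpha t m)%:E <=
     \sum_(k.+1 <= m <oo) (ghat p m)%:E)%E.
Proof.
move=> t k.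
have p_gt0 : 0 < p by apply: lt_trans hp; rewrite divr_gt0.
have p01 : 0 <= p <= 1 by rewrite ltW.
have [c c_ge0 [down_le up_le]] := exists_comparison_ratio halpha p_gt0 hcmp.
apply: lee_nneseries => [n _ _|n _]; rewrite lee_fin; first exact: fp_ge0.
exact: (gret_le_ghat halpha p01 c_ge0 down_le up_le p_gt0).
Qed.
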